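(* Let $G$ be a group, $H$ a finite index normal subgroup of $G$, $K$ a normal subgroup of $G$, and $g\in H$. Suppose $g$ has a minimal root $a$ in $G$ with respect to $K$, and let $\psi:G\to G/H$ be the quotient map. Then \[\nu(g;H,K\cap H)\ge \frac{\nu(g;G,K)}{o(\psi(a),G/H)}.\]
   Context: For a group $G$, a normal subgroup $K$ and $g\in G$, with $\pi:G\to G/K$ the quotient map: if $g\in K$, $\nu(g;G,K)$ is the supremum of the orders $o(\pi(a),G/K)$ over all $a\in G$ with $a^n=g$ for some integer $n$; if $g\notin K$, $\nu(g;G,K)$ is the supremum of all non-zero integers $n$ such that $g=a^n$ for some $a\in G$. When $\nu(g;G,K)$ is finite, a minimal root of $g$ in $G$ with respect to $K$ is an element $a\in G$ attaining this supremum (i.e. $a^n=g$ for some $n$ and $o(\pi(a),G/K)=\nu(g;G,K)$ if $g\in K$; $a^{\nu(g;G,K)}=g$ if $g\notin K$). $\nu(g;H,K\cap H)$ is defined in the same way inside $H$. $o(x,Q)$ denotes the order of $x$ in the group $Q$. *)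

From Stdlib Require Import Reals ZArith Arith List.

Record group := Group {
  carrier :> Type;
  gmul : carrier -> carrier -> carrier;
  gone : carrier;
  ginv : carrier -> carrier;
  gmulA : forall x y z, gmul x (gmul y z) = gmul (gmul x y) z;
  gmul1l : forall x, gmul gone x = x;
  gmulVl : forall x, gmul (ginv x) x = gone
}.

Section Defs.
Variable G : group.

Fixpoint gpow (a : G) (n : nat) : G :=
  match n with O => gone G | S n' => gmul G a (gpow a n') end.

Definition gzpow (a : G) (n : Z) : G :=
  match n with
  | Z0 => gone G
  | Zpos p => gpow a (Pos.to_nat p)
  | Zneg p => ginv G (gpow a (Pos.to_nat p))
  end.

Definition is_subgroup (H : G -> Prop) : Prop :=
  H (gone G) /\ (forall x y, H x -> H y -> H (gmul G x y)) /\
  (forall x, H x -> H (ginv G x)).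

Definition is_normal_in (P N : G -> Prop) : Prop :=
  is_subgroup N /\ (forall x, N x -> P x) /\
  (forall x y, N x -> P y -> N (gmul G (ginv G y) (gmul G x y))).

Definition finite_index (H : G -> Prop) : Prop :=
  exists l : list G, forall x, exists r, In r l /\ H (gmul G (ginv G r) x).

(* o(pi(a), P/N) = k (finite), where pi : P -> P/N: the least k > 0 with a^k in N *)
Definition is_qorder (N : G -> Prop) (a : G) (k : nat) : Prop :=
  (0 < k)%nat /\ N (gpow a k) /\ (forall j, (0 < j < k)%nat -> ~ N (gpow a j)).

(* nu(g; P, N) is finite and equal to m (the supremum is then a maximum).
   If nu(g;P,N) is infinite, there is no m with nu_fin P N g m. *)
Definition nu_fin (P N : G -> Prop) (g : G) (m : nat) : Prop :=
  (N g ->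
     (exists a, P a /\ (exists n : Z, gzpow a n = g) /\ is_qorder N a m) /\
     (forall a, P a -> (exists n : Z, gzpow a n = g) ->
        exists k, is_qorder N a k /\ (k <= m)%nat)) /\
  (~ N g ->
     (exists a, P a /\ (0 < m)%nat /\ gzpow a (Z.of_nat m) = g) /\
     (forall a (n : Z), P a -> n <> 0%Z -> gzpow a n = g -> (n <= Z.of_nat m)%Z)).

Definition is_min_root (P N : G -> Prop) (g a : G) : Prop :=
  P a /\ exists m, nu_fin P N g m /\
    (N g -> (exists n : Z, gzpow a n = g) /\ is_qorder N a m) /\
    (~ N g -> gzpow a (Z.of_nat m) = g).

Definition setT_g : G -> Prop := fun _ => True.

End Defs.

Arguments setT_g {G}.

(* Put b := a^k with k = o(psi(a), G/H), so b lies in H. Since g lies in H and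
   is a power of a, its exponent is a multiple of k, so g is also a power of b.
   If g lies in K, then a^(k k') lies in K where k' = o(bK) <= nu(g; H, K cap H),
   and minimality of the root a gives nu(g; G, K) = o(aK) <= k k'.
   If g does not lie in K, then g = a^nu(g;G,K) = b^(nu(g;G,K)/k), so
   nu(g; G, K)/k <= nu(g; H, K cap H). *)

From Stdlib Require Import Reals ZArith Arith Lia Lra Classical_Prop.

Section GroupFacts.
Variable G : group.
Local Notation "x ** y" := (gmul G x y) (at level 40, left associativity).
Local Notation inv := (ginv G).
Local Notation one := (gone G).

Lemma gmul_inv_cancel_l (y z : G) : inv y ** (y ** z) = z.
Proof. now rewrite gmulA, gmulVl, gmul1l. Qed.

Lemma gmulVr (x : G) : x ** inv x = one.
Proof.
  rewrite <- (gmul1l G (x ** inv x)).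
  rewrite <- (gmulVl G (inv x)) at 1.
  rewrite <- gmulA, (gmulA _ (inv x) x (inv x)), gmulVl, gmul1l.
  apply gmulVl.
Qed.

Lemma gmul1r (x : G) : x ** one = x.
Proof. now rewrite <- (gmulVl G x), gmulA, gmulVr, gmul1l. Qed.

Lemma ginv_involutive (x : G) : inv (inv x) = x.
Proof.
  rewrite <- (gmul1r (inv (inv x))), <- (gmulVl G x).
  now rewrite gmulA, gmulVl, gmul1l.
Qed.

Lemma gpow_add (a : G) n m : gpow G a (n + m) = gpow G a n ** gpow G a m.
Proof.
  induction n as [|n IH]; simpl.
  - now rewrite gmul1l.
  - now rewrite IH, gmulA.
Qed.

Lemma gpow_mul (a : G) n m : gpow G a (n * m) = gpow G (gpow G a n) m.
Proof.
  induction m as [|m IH]; simpl.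
  - now rewrite Nat.mul_0_r.
  - now rewrite Nat.mul_succ_r, Nat.add_comm, gpow_add, IH.
Qed.

Lemma gzpow_of_nat (x : G) n : gzpow G x (Z.of_nat n) = gpow G x n.
Proof. destruct n; simpl; auto. now rewrite SuccNat2Pos.id_succ. Qed.

Lemma subgroup_gpow (H : G -> Prop) x n :
  is_subgroup G H -> H x -> H (gpow G x n).
Proof. intros [H1 [HM _]] Hx; induction n; simpl; auto. Qed.

End GroupFacts.

Section QuotientOrder.
Variable G : group.

Lemma qorder_le (N : G -> Prop) a k n :
  is_qorder G N a k -> 0 < n -> N (gpow G a n) -> k <= n.
Proof.
  intros [_ [_ Hmin]] Hn HN.
  destruct (le_lt_dec k n) as [|Hlt]; auto.
  exfalso; apply (Hmin n); auto.
Qed.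

Lemma qorder_unique (N : G -> Prop) a k k' :
  is_qorder G N a k -> is_qorder G N a k' -> k = k'.
Proof.
  intros Hk Hk'.
  pose proof Hk as [Hk0 [HNk _]]; pose proof Hk' as [Hk0' [HNk' _]].
  pose proof (qorder_le _ _ _ _ Hk Hk0' HNk').
  pose proof (qorder_le _ _ _ _ Hk' Hk0 HNk). lia.
Qed.

Lemma qorder_divides (H : G -> Prop) a k n :
  is_subgroup G H -> is_qorder G H a k -> H (gpow G a n) -> exists q, n = k * q.
Proof.
  intros sH [Hk0 [HNk Hmin]] Hn.
  pose proof (Nat.div_mod n k ltac:(lia)) as Ediv.
  destruct (Nat.eq_dec (n mod k) 0) as [Z|NZ].
  - exists (n / k). lia.
  - exfalso. apply (Hmin (n mod k)).
    + pose proof (Nat.mod_upper_bound n k ltac:(lia)). lia.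
    + assert (Hrem : gpow G a (n mod k) =
                     gmul G (ginv G (gpow G a (k * (n / k)))) (gpow G a n)).
      { replace (gpow G a n) with (gpow G a (k * (n / k) + n mod k))
          by now rewrite <- Ediv.
        now rewrite gpow_add, gmul_inv_cancel_l. }
      pose proof sH as [_ [HM HI]].
      rewrite Hrem, gpow_mul. apply HM; [apply HI, subgroup_gpow|]; auto.
Qed.

Lemma gzpow_qorder_pow (H : G -> Prop) a k n :
  is_subgroup G H -> is_qorder G H a k -> H (gzpow G a n) ->
  exists n', gzpow G (gpow G a k) n' = gzpow G a n.
Proof.
  intros sH Hk Hn. pose proof sH as [_ [_ HI]].
  destruct n as [|p|p]; simpl in Hn |- *.
  - now exists 0%Z.
  - destruct (qorder_divides H a k _ sH Hk Hn) as [q Eq].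
    exists (Z.of_nat q). now rewrite gzpow_of_nat, <- gpow_mul, <- Eq.
  - assert (Hp : H (gpow G a (Pos.to_nat p))).
    { rewrite <- ginv_involutive. auto. }
    destruct (qorder_divides H a k _ sH Hk Hp) as [[|q] Eq]; [lia|].
    exists (- Z.of_nat (S q))%Z. simpl.
    now rewrite SuccNat2Pos.id_succ, <- gpow_mul, <- Eq.
Qed.

End QuotientOrder.

Section RootIndex.
Variable G : group.

Lemma nu_fin_unique (P N : G -> Prop) g m m' :
  nu_fin G P N g m -> nu_fin G P N g m' -> m = m'.
Proof.
  assert (Hle : forall m m', nu_fin G P N g m -> nu_fin G P N g m' -> m <= m').
  { intros m1 m2 [HK1 HnK1] [HK2 HnK2].
    destruct (classic (N g)) as [Ng|nNg].
    - destruct (HK1 Ng) as [[b [Pb [Rb Qb]]] _].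
      destruct (HK2 Ng) as [_ Bnd].
      destruct (Bnd b Pb Rb) as [k [Qk Hk]].
      rewrite (qorder_unique G N b m1 k Qb Qk). exact Hk.
    - destruct (HnK1 nNg) as [[b [Pb [Hm1 Eb]]] _].
      destruct (HnK2 nNg) as [_ Bnd].
      pose proof (Bnd b (Z.of_nat m1) Pb ltac:(lia) Eb). lia. }
  intros; apply Nat.le_antisymm; auto.
Qed.

Lemma min_root_spec (P N : G -> Prop) g a m :
  is_min_root G P N g a -> nu_fin G P N g m ->
  (N g -> (exists n, gzpow G a n = g) /\ is_qorder G N a m) /\
  (~ N g -> gpow G a m = g).
Proof.
  intros [_ [m' [Hnu' [HK HnK]]]] Hnu.
  rewrite (nu_fin_unique P N g m m' Hnu Hnu').
  split; [exact HK|]. intros nNg. rewrite <- gzpow_of_nat. auto.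
Qed.

Section Subgroup.
Variables (H K : G -> Prop) (g a : G) (k v : nat).
Hypotheses (sH : is_subgroup G H) (Hg : H g) (Hk : is_qorder G H a k)
  (Hv : nu_fin G H (fun x => K x /\ H x) g v).

Let b := gpow G a k.

Lemma qorder_pow_mem : H b.
Proof. destruct Hk as [_ [Hb _]]; exact Hb. Qed.

Lemma qorder_le_mul_nu_in (m : nat) :
  K g -> (exists n, gzpow G a n = g) -> is_qorder G K a m -> m <= k * v.
Proof.
  intros Kg [n Hn] Ham.
  destruct (gzpow_qorder_pow G H a k n sH Hk) as [n' Hn']; [now rewrite Hn|].
  destruct Hv as [[_ Bnd] _]; [tauto|].
  destruct (Bnd b qorder_pow_mem (ex_intro _ n' (eq_trans Hn' Hn)))
    as [k' [Hk' Hk'v]].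
  pose proof Hk' as [Hk'0 [[Kbk' _] _]]. pose proof Hk as [Hk0 _].
  unfold b in Kbk'. rewrite <- gpow_mul in Kbk'.
  pose proof (qorder_le G K a m (k * k') Ham ltac:(nia) Kbk'). nia.
Qed.

Lemma exponent_le_mul_nu_out (m : nat) :
  ~ K g -> gpow G a m = g -> m <= k * v.
Proof.
  intros nKg Ham.
  destruct (qorder_divides G H a k m sH Hk) as [q Eq]; [now rewrite Ham|].
  destruct Hv as [_ [_ Bnd]]; [tauto|].
  assert (Ebq : gzpow G b (Z.of_nat q) = g).
  { unfold b. now rewrite gzpow_of_nat, <- gpow_mul, <- Eq. }
  destruct q as [|q]; [nia|].
  pose proof (Bnd b (Z.of_nat (S q)) qorder_pow_mem ltac:(lia) Ebq).
  nia.
Qed.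

End Subgroup.
End RootIndex.

Lemma INR_div_le (m k v : nat) : 0 < k -> m <= k * v -> (INR m / INR k <= INR v)%R.
Proof.
  intros Hk Hm.
  apply le_INR in Hm. apply lt_0_INR in Hk. rewrite mult_INR in Hm.
  unfold Rdiv. apply (Rmult_le_reg_r (INR k)); auto.
  rewrite Rmult_assoc, Rinv_l by lra. lra.
Qed.

Theorem mainTheorem13 (G : group) (H K : G -> Prop)
  (nH : is_normal_in G setT_g H) (fiH : finite_index G H)
  (nK : is_normal_in G setT_g K) (g : G) (Hg : H g) (a : G)
  (amin : is_min_root G setT_g K g a) :
  forall (m k : nat),
    nu_fin G setT_g K g m ->          (* m = nu(g; G, K) *)
    is_qorder G H a k ->              (* k = o(psi(a), G/H) *)
    forall v : nat,
      nu_fin G H (fun x => K x /\ H x) g v ->   (* v = nu(g; H, K cap H), if finite *)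
      (INR m / INR k <= INR v)%R.
Proof.
  (* Neither the finiteness of the index of H nor the normality of K is needed. *)
  intros m k Hm Hk v Hv.
  destruct nH as [sH _].
  destruct (min_root_spec G setT_g K g a m amin Hm) as [HK HnK].
  apply INR_div_le; [now destruct Hk|].
  destruct (classic (K g)) as [Kg|nKg].
  - destruct (HK Kg) as [Hroot Ham].
    exact (qorder_le_mul_nu_in G H K g a k v sH Hg Hk Hv m Kg Hroot Ham).
  - exact (exponent_le_mul_nu_out G H K g a k v sH Hg Hk Hv m nKg (HnK nKg)).
Qed.
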